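(* Let $S$ be the class of Schreier split epimorphisms in the category $\mathsf{Mon}$ of monoids. Then $\mathsf{Mon}$ is $S$-fibrewise algebraically cartesian closed (for every split epimorphism $h\colon E\to B$, $h^*\colon SPt_B(\mathsf{Mon})\to SPt_E(\mathsf{Mon})$ has a right adjoint) and $S$-algebraically coherent (for every homomorphism $h\colon E\to B$, $h^*\colon SPt_B(\mathsf{Mon})\to SPt_E(\mathsf{Mon})$ preserves jointly strongly epimorphic pairs).
   Context: Monoids are written additively. A point is a split epimorphism $f\colon A\to B$ with chosen section $s$ ($fs=1_B$); $Pt_B$ is the category of points over $B$; for $h\colon E\to B$, $h^*$ pulls points back along $h$. A split epimorphism $(A,B,f,s)$ of monoids is Schreier if each $a\in A$ can be written uniquely as $a=\alpha+sf(a)$ with $\alpha\in\mathrm{Ker}(f)$. $SPt_B(\mathsf{Mon})$ is the full subcategory of $Pt_B(\mathsf{Mon})$ of Schreier points. A pair of morphisms with common codomain is jointly strongly epimorphic if whenever both factor through a monomorphism $m$, $m$ is an isomorphism. *)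

From Stdlib Require Import ProofIrrelevance.

Set Implicit Arguments.

Record Monoid := {
  car :> Type;
  madd : car -> car -> car;
  mzero : car;
  maddA : forall x y z, madd x (madd y z) = madd (madd x y) z;
  madd0l : forall x, madd mzero x = x;
  madd0r : forall x, madd x mzero = x
}.
Arguments madd {m}.
Arguments mzero {m}.

Record Hom (A B : Monoid) := {
  hfun :> A -> B;
  hom_add : forall x y, hfun (madd x y) = madd (hfun x) (hfun y);
  hom_zero : hfun mzero = mzero
}.

Definition hom_id (A : Monoid) : Hom A A :=
  {| hfun := fun x => x; hom_add := fun _ _ => eq_refl; hom_zero := eq_refl |}.

Lemma comp_add (A B C : Monoid) (g : Hom B C) (f : Hom A B) x y :
  g (f (madd x y)) = madd (g (f x)) (g (f y)).
Proof. rewrite (hom_add f), (hom_add g). reflexivity. Qed.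
Lemma comp_zero (A B C : Monoid) (g : Hom B C) (f : Hom A B) :
  g (f mzero) = mzero.
Proof. rewrite (hom_zero f), (hom_zero g). reflexivity. Qed.

Definition hom_comp (A B C : Monoid) (g : Hom B C) (f : Hom A B) : Hom A C :=
  {| hfun := fun x => g (f x); hom_add := comp_add g f; hom_zero := comp_zero g f |}.

Record Point (B : Monoid) := {
  ptA : Monoid;
  ptf : Hom ptA B;
  pts : Hom B ptA;
  pt_sec : forall b, ptf (pts b) = b
}.

Definition schreier (B : Monoid) (P : Point B) : Prop :=
  forall a : ptA P,
    exists! alpha : ptA P, ptf P alpha = mzero /\ a = madd alpha (pts P (ptf P a)).

Record PtHom (B : Monoid) (X Y : Point B) := {
  phom :> Hom (ptA X) (ptA Y);
  ph_f : forall a, ptf Y (phom a) = ptf X a;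
  ph_s : forall b, phom (pts X b) = pts Y b
}.

Definition pt_eq (B : Monoid) (X Y : Point B) (u v : PtHom X Y) : Prop :=
  forall a, u a = v a.

Lemma ptid_f (B : Monoid) (X : Point B) a : ptf X (hom_id (ptA X) a) = ptf X a.
Proof. reflexivity. Qed.
Lemma ptid_s (B : Monoid) (X : Point B) b : hom_id (ptA X) (pts X b) = pts X b.
Proof. reflexivity. Qed.
Definition pt_id (B : Monoid) (X : Point B) : PtHom X X :=
  {| phom := hom_id (ptA X); ph_f := @ptid_f B X; ph_s := @ptid_s B X |}.

Lemma ptcomp_f (B : Monoid) (X Y Z : Point B) (v : PtHom Y Z) (u : PtHom X Y) a :
  ptf Z (hom_comp v u a) = ptf X a.
Proof. simpl. rewrite (ph_f v), (ph_f u). reflexivity. Qed.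
Lemma ptcomp_s (B : Monoid) (X Y Z : Point B) (v : PtHom Y Z) (u : PtHom X Y) b :
  hom_comp v u (pts X b) = pts Z b.
Proof. simpl. rewrite (ph_s u), (ph_s v). reflexivity. Qed.
Definition pt_comp (B : Monoid) (X Y Z : Point B) (v : PtHom Y Z) (u : PtHom X Y)
  : PtHom X Z :=
  {| phom := hom_comp v u; ph_f := ptcomp_f v u; ph_s := ptcomp_s v u |}.

Definition is_mono_S (B : Monoid) (M Z : Point B) (m : PtHom M Z) : Prop :=
  forall (W : Point B), schreier W ->
  forall u v : PtHom W M, pt_eq (pt_comp m u) (pt_comp m v) -> pt_eq u v.

Definition is_iso (B : Monoid) (M Z : Point B) (m : PtHom M Z) : Prop :=
  exists n : PtHom Z M, pt_eq (pt_comp n m) (pt_id M) /\ pt_eq (pt_comp m n) (pt_id Z).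

Definition jointly_strong_epi_S (B : Monoid) (X1 X2 Z : Point B)
  (f1 : PtHom X1 Z) (f2 : PtHom X2 Z) : Prop :=
  forall (M : Point B), schreier M ->
  forall (m : PtHom M Z), is_mono_S m ->
  forall (g1 : PtHom X1 M) (g2 : PtHom X2 M),
    pt_eq (pt_comp m g1) f1 -> pt_eq (pt_comp m g2) f2 -> is_iso m.

Section Pullback.
Variables (E B : Monoid) (h : Hom E B) (P : Point B).

Definition pb_car : Type :=
  { p : car E * car (ptA P) | h (fst p) = ptf P (snd p) }.

Lemma sig_ext (x y : pb_car) : proj1_sig x = proj1_sig y -> x = y.
Proof.
  destruct x as [x Hx], y as [y Hy]; simpl; intros ->.
  f_equal; apply proof_irrelevance.
Qed.

Lemma pb_add_ok (x y : pb_car) :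
  h (fst (madd (fst (proj1_sig x)) (fst (proj1_sig y)),
          madd (snd (proj1_sig x)) (snd (proj1_sig y))))
  = ptf P (snd (madd (fst (proj1_sig x)) (fst (proj1_sig y)),
          madd (snd (proj1_sig x)) (snd (proj1_sig y)))).
Proof.
  destruct x as [[e1 a1] H1], y as [[e2 a2] H2]; simpl in *.
  rewrite (hom_add h), (hom_add (ptf P)), H1, H2. reflexivity.
Qed.

Definition pb_add (x y : pb_car) : pb_car :=
  exist _ (madd (fst (proj1_sig x)) (fst (proj1_sig y)),
           madd (snd (proj1_sig x)) (snd (proj1_sig y))) (pb_add_ok x y).

Lemma pb_zero_ok : h (fst (@mzero E, @mzero (ptA P)))
                   = ptf P (snd (@mzero E, @mzero (ptA P))).
Proof. simpl. rewrite (hom_zero h), (hom_zero (ptf P)). reflexivity. Qed.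

Definition pb_zero : pb_car := exist _ (mzero, mzero) pb_zero_ok.

Lemma pb_addA x y z : pb_add x (pb_add y z) = pb_add (pb_add x y) z.
Proof. apply sig_ext; simpl. rewrite !maddA. reflexivity. Qed.
Lemma pb_add0l x : pb_add pb_zero x = x.
Proof. apply sig_ext; destruct x as [[e a] H]; simpl. rewrite !madd0l. reflexivity. Qed.
Lemma pb_add0r x : pb_add x pb_zero = x.
Proof. apply sig_ext; destruct x as [[e a] H]; simpl. rewrite !madd0r. reflexivity. Qed.

Definition pb_monoid : Monoid :=
  {| car := pb_car; madd := pb_add; mzero := pb_zero;
     maddA := pb_addA; madd0l := pb_add0l; madd0r := pb_add0r |}.

Definition pb_proj : Hom pb_monoid E :=
  {| hfun := fun x : pb_monoid => fst (proj1_sig (x : pb_car));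
     hom_add := fun _ _ => eq_refl; hom_zero := eq_refl |}.

Lemma pb_sec_ok (e : E) : h (fst (e, pts P (h e))) = ptf P (snd (e, pts P (h e))).
Proof. simpl. rewrite pt_sec. reflexivity. Qed.

Definition pb_sec_fun (e : E) : pb_car := exist _ (e, pts P (h e)) (pb_sec_ok e).

Lemma pb_sec_add x y : pb_sec_fun (madd x y) = pb_add (pb_sec_fun x) (pb_sec_fun y).
Proof. apply sig_ext; simpl. rewrite (hom_add h), (hom_add (pts P)). reflexivity. Qed.
Lemma pb_sec_zero : pb_sec_fun mzero = pb_zero.
Proof. apply sig_ext; simpl. rewrite (hom_zero h), (hom_zero (pts P)). reflexivity. Qed.

Definition pb_sec : Hom E pb_monoid :=
  {| hfun := (pb_sec_fun : E -> pb_monoid); hom_add := pb_sec_add; hom_zero := pb_sec_zero |}.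

Lemma pb_is_sec e : pb_proj (pb_sec e) = e.
Proof. reflexivity. Qed.

Definition pullback : Point E :=
  {| ptA := pb_monoid; ptf := pb_proj; pts := pb_sec; pt_sec := pb_is_sec |}.
End Pullback.

Section PullbackHom.
Variables (E B : Monoid) (h : Hom E B) (X Y : Point B) (g : PtHom X Y).

Lemma pbh_ok (x : pb_car h X) :
  h (fst (fst (proj1_sig x), g (snd (proj1_sig x))))
  = ptf Y (snd (fst (proj1_sig x), g (snd (proj1_sig x)))).
Proof. destruct x as [[e a] H]; simpl in *. rewrite (ph_f g). exact H. Qed.

Definition pbh_fun (x : pb_car h X) : pb_car h Y :=
  exist _ (fst (proj1_sig x), g (snd (proj1_sig x))) (pbh_ok x).

Lemma pbh_add x y : pbh_fun (pb_add x y) = pb_add (pbh_fun x) (pbh_fun y).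
Proof. apply sig_ext; simpl. rewrite (hom_add g). reflexivity. Qed.
Lemma pbh_zero : pbh_fun (pb_zero h X) = pb_zero h Y.
Proof. apply sig_ext; simpl. rewrite (hom_zero g). reflexivity. Qed.

Definition pbh_hom : Hom (ptA (pullback h X)) (ptA (pullback h Y)) :=
  {| hfun := (pbh_fun : pb_monoid h X -> pb_monoid h Y); hom_add := pbh_add; hom_zero := pbh_zero |}.

Lemma pbh_f a : ptf (pullback h Y) (pbh_hom a) = ptf (pullback h X) a.
Proof. reflexivity. Qed.
Lemma pbh_s e : pbh_hom (pts (pullback h X) e) = pts (pullback h Y) e.
Proof. apply sig_ext; simpl. rewrite (ph_s g). reflexivity. Qed.

Definition pullback_hom : PtHom (pullback h X) (pullback h Y) :=
  {| phom := pbh_hom; ph_f := pbh_f; ph_s := pbh_s |}.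
End PullbackHom.

Definition pullback_preserves_schreier (E B : Monoid) (h : Hom E B) : Prop :=
  forall P : Point B, schreier P -> schreier (pullback h P).

(** h^* : SPt_B -> SPt_E has a right adjoint, expressed by couniversal arrows:
    for every Schreier point Y over E there are a Schreier point R Y over B and
    a counit eps : h^*(R Y) -> Y such that every f : h^* X -> Y (X Schreier over B)
    factors as eps o h^*(g) for a unique g : X -> R Y. *)
Definition has_right_adjoint_S (E B : Monoid) (h : Hom E B) : Prop :=
  forall Y : Point E, schreier Y ->
  exists (R : Point B) (eps : PtHom (pullback h R) Y),
    schreier R /\
    forall X : Point B, schreier X ->
    forall f : PtHom (pullback h X) Y,
      exists g : PtHom X R,
        pt_eq (pt_comp eps (pullback_hom h g)) f /\
        forall g' : PtHom X R,
          pt_eq (pt_comp eps (pullback_hom h g')) f -> pt_eq g' g.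

Definition preserves_jse_S (E B : Monoid) (h : Hom E B) : Prop :=
  forall (X1 X2 Z : Point B), schreier X1 -> schreier X2 -> schreier Z ->
  forall (f1 : PtHom X1 Z) (f2 : PtHom X2 Z),
    jointly_strong_epi_S f1 f2 ->
    jointly_strong_epi_S (pullback_hom h f1) (pullback_hom h f2).

Definition split_epi (E B : Monoid) (h : Hom E B) : Prop :=
  exists s : Hom B E, forall b, h (s b) = b.

(* A Schreier point (f, s) : A -> B comes with its Schreier retraction
   q : A -> Ker f, a = q a + s (f a), which satisfies q (u + v) = q u + q (s (f u) + v).
   The pullback of a Schreier point along any h has retraction (e, a) |-> (0, q a).
   When h : E -> B has a section t, the right adjoint of h^* sends a Schreier point Y
   over E to the point over B of pairs (phi, b), where phi : B -> Ker Y satisfies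
   phi (h e + c) = q (s e + phi c), under (phi, b) + (psi, b') = (phi + psi (- + b), b + b');
   the counit is (e, (phi, b)) |-> phi 0 + s e, and evaluating it at (t (c + f x), s c + x)
   recovers the function component of any candidate transpose, whence uniqueness.
   For coherence, monomorphisms of Schreier points are injective (test them on the
   kernel pair). If h^* f1 and h^* f2 factor through a mono m : M -> h^* Z, the z in Z
   whose conjugates q (s b + z) all lie in the kernel part of the image of m form a
   Schreier subpoint through which f1 and f2 factor; hence it is all of Z, m is
   bijective, and so an isomorphism. *)

From Stdlib Require Import ProofIrrelevance FunctionalExtensionality ClassicalEpsilon.
Set Implicit Arguments.

Lemma proj1_sig_inj (A : Type) (P : A -> Prop) (x y : sig P) :
  proj1_sig x = proj1_sig y -> x = y.
Proof. apply eq_sig_hprop; intros; apply proof_irrelevance. Qed.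

Section SchreierRetraction.
Variables (B : Monoid) (P : Point B) (HP : schreier P).

Definition sretr (a : ptA P) : ptA P :=
  proj1_sig (constructive_indefinite_description _ (HP a)).

Lemma sretr_spec a :
  (ptf P (sretr a) = mzero /\ a = madd (sretr a) (pts P (ptf P a))) /\
  (forall k, ptf P k = mzero /\ a = madd k (pts P (ptf P a)) -> sretr a = k).
Proof.
  unfold sretr; destruct (constructive_indefinite_description _ (HP a)) as [k Hk].
  exact Hk.
Qed.

Lemma sretr_ker a : ptf P (sretr a) = mzero.
Proof. apply (sretr_spec a). Qed.

Lemma sretr_decomp a : a = madd (sretr a) (pts P (ptf P a)).
Proof. apply (sretr_spec a). Qed.

Lemma sretr_unique a k b : ptf P k = mzero -> a = madd k (pts P b) -> sretr a = k.
Proof.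
  intros Hk Ha.
  assert (Hb : ptf P a = b).
  { rewrite Ha, (hom_add (ptf P)), Hk, pt_sec, madd0l; reflexivity. }
  apply (sretr_spec a); rewrite Hb; split; assumption.
Qed.

Lemma sretr_sec b : sretr (pts P b) = mzero.
Proof. apply sretr_unique with b; [apply hom_zero | symmetry; apply madd0l]. Qed.

Lemma sretr_add_sec a b : sretr (madd a (pts P b)) = sretr a.
Proof.
  apply sretr_unique with (madd (ptf P a) b); [apply sretr_ker|].
  rewrite (hom_add (pts P)), maddA, <- sretr_decomp; reflexivity.
Qed.

Lemma sretr_add u v :
  sretr (madd u v) = madd (sretr u) (sretr (madd (pts P (ptf P u)) v)).
Proof.
  apply sretr_unique with (madd (ptf P u) (ptf P v)).
  - rewrite (hom_add (ptf P)), !sretr_ker, madd0l; reflexivity.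
  - assert (Hf : ptf P (madd (pts P (ptf P u)) v) = madd (ptf P u) (ptf P v)).
    { rewrite (hom_add (ptf P)), pt_sec; reflexivity. }
    rewrite <- maddA, <- Hf, <- sretr_decomp, maddA, <- sretr_decomp; reflexivity.
Qed.

Lemma sretr_sec_sretr b a : sretr (madd (pts P b) (sretr a)) = sretr (madd (pts P b) a).
Proof.
  rewrite (sretr_decomp a) at 2; rewrite maddA, sretr_add_sec; reflexivity.
Qed.

Lemma sretr_sec_add_ker b k a : ptf P k = mzero ->
  sretr (madd (pts P b) (madd k a))
  = madd (sretr (madd (pts P b) k)) (sretr (madd (pts P b) a)).
Proof.
  intros Hk.
  rewrite maddA, sretr_add, (hom_add (ptf P)), pt_sec, Hk, madd0r; reflexivity.
Qed.

Lemma sretr_conj b k : ptf P k = mzero ->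
  madd (sretr (madd (pts P b) k)) (pts P b) = madd (pts P b) k.
Proof.
  intros Hk; rewrite (sretr_decomp (madd (pts P b) k)) at 2.
  rewrite (hom_add (ptf P)), pt_sec, Hk, madd0r; reflexivity.
Qed.
End SchreierRetraction.

Lemma sretr_natural (B : Monoid) (P Q : Point B) (HP : schreier P) (HQ : schreier Q)
  (u : PtHom P Q) a : u (sretr HP a) = sretr HQ (u a).
Proof.
  symmetry; apply sretr_unique with (ptf P a).
  - rewrite ph_f; apply sretr_ker.
  - rewrite <- (ph_s u), <- (hom_add u), <- sretr_decomp; reflexivity.
Qed.

Section SubMonoid.
Variables (A : Monoid) (S : A -> Prop).
Hypotheses (S_add : forall x y, S x -> S y -> S (madd x y)) (S_zero : S mzero).

Definition sub_add (x y : sig S) : sig S :=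
  exist S (madd (proj1_sig x) (proj1_sig y)) (S_add (proj2_sig x) (proj2_sig y)).

Definition sub_zero : sig S := exist S mzero S_zero.

Lemma sub_addA x y z : sub_add x (sub_add y z) = sub_add (sub_add x y) z.
Proof. apply proj1_sig_inj, maddA. Qed.
Lemma sub_add0l x : sub_add sub_zero x = x.
Proof. apply proj1_sig_inj, madd0l. Qed.
Lemma sub_add0r x : sub_add x sub_zero = x.
Proof. apply proj1_sig_inj, madd0r. Qed.

Definition sub_monoid : Monoid :=
  {| car := sig S; madd := sub_add; mzero := sub_zero;
     maddA := sub_addA; madd0l := sub_add0l; madd0r := sub_add0r |}.

Definition sub_val : Hom sub_monoid A :=
  {| hfun := fun x : sub_monoid => proj1_sig (x : sig S);
     hom_add := fun _ _ => eq_refl; hom_zero := eq_refl |}.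

Section Corestriction.
Variables (C : Monoid) (u : Hom C A) (Hu : forall c, S (u c)).

Definition sub_corestr_fun (c : C) : sub_monoid := exist S (u c) (Hu c).

Lemma sub_corestr_add x y :
  sub_corestr_fun (madd x y) = madd (sub_corestr_fun x) (sub_corestr_fun y).
Proof. apply proj1_sig_inj, hom_add. Qed.
Lemma sub_corestr_zero : sub_corestr_fun mzero = mzero.
Proof. apply proj1_sig_inj, hom_zero. Qed.

Definition sub_corestr : Hom C sub_monoid :=
  {| hfun := sub_corestr_fun; hom_add := sub_corestr_add; hom_zero := sub_corestr_zero |}.
End Corestriction.
End SubMonoid.

Arguments sub_monoid {A S} S_add S_zero.
Arguments sub_val {A S} S_add S_zero.
Arguments sub_corestr {A S} S_add S_zero {C} u Hu.

Section SubPoint.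
Variables (B : Monoid) (P : Point B) (S : ptA P -> Prop).
Hypotheses (S_add : forall x y, S x -> S y -> S (madd x y)) (S_zero : S mzero)
  (S_sec : forall b, S (pts P b)).

Definition sub_point : Point B :=
  {| ptA := sub_monoid S_add S_zero;
     ptf := hom_comp (ptf P) (sub_val S_add S_zero);
     pts := sub_corestr S_add S_zero (pts P) S_sec;
     pt_sec := pt_sec P |}.

Definition sub_incl : PtHom sub_point P :=
  @Build_PtHom B sub_point P (sub_val S_add S_zero) (fun _ => eq_refl) (fun _ => eq_refl).

Lemma sub_incl_mono : is_mono_S sub_incl.
Proof. intros W _ u v Huv a; apply proj1_sig_inj, Huv. Qed.

Lemma sub_incl_iso_full : is_iso sub_incl -> forall a, S a.
Proof.
  intros [n [_ Hn]] a; specialize (Hn a); simpl in Hn.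
  rewrite <- Hn; exact (proj2_sig (n a : sig S)).
Qed.

Lemma sub_pt_corestr_s (X : Point B) (u : PtHom X P) (Hu : forall x, S (u x)) b :
  sub_corestr S_add S_zero u Hu (pts X b) = pts sub_point b.
Proof. apply proj1_sig_inj, ph_s. Qed.

Definition sub_pt_corestr (X : Point B) (u : PtHom X P) (Hu : forall x, S (u x))
  : PtHom X sub_point :=
  @Build_PtHom B X sub_point (sub_corestr S_add S_zero u Hu) (ph_f u) (sub_pt_corestr_s u Hu).

Lemma sub_point_schreier (HP : schreier P) :
  (forall a, S a -> S (sretr HP a)) -> schreier sub_point.
Proof.
  intros S_sretr [a Ha]; exists (exist S (sretr HP a) (S_sretr a Ha)); split.
  - split; [apply sretr_ker | apply proj1_sig_inj, sretr_decomp].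
  - intros [k Hk] [Hk0 Hdec]; apply proj1_sig_inj, sretr_unique with (ptf P a).
    + exact Hk0.
    + exact (f_equal (@proj1_sig _ _) Hdec).
Qed.
End SubPoint.

Arguments sub_point {B P S} S_add S_zero S_sec.
Arguments sub_incl {B P S} S_add S_zero S_sec.
Arguments sub_pt_corestr {B P S} S_add S_zero S_sec {X} u Hu.

Section ShiftPoint.
Variables (A B : Monoid).

Definition shift_add (x y : (B -> A) * B) : (B -> A) * B :=
  (fun c => madd (fst x c) (fst y (madd c (snd x))), madd (snd x) (snd y)).

Definition shift_zero : (B -> A) * B := (fun _ => mzero, mzero).

Lemma shift_ext (x y : (B -> A) * B) :
  (forall c, fst x c = fst y c) -> snd x = snd y -> x = y.
Proof.
  destruct x as [p b], y as [q b']; simpl; intros Hpq ->.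
  apply functional_extensionality in Hpq; subst; reflexivity.
Qed.

Lemma shift_addA x y z : shift_add x (shift_add y z) = shift_add (shift_add x y) z.
Proof. apply shift_ext; simpl; intros; rewrite !maddA; reflexivity. Qed.
Lemma shift_add0l x : shift_add shift_zero x = x.
Proof. apply shift_ext; simpl; intros; rewrite ?madd0l, ?madd0r; reflexivity. Qed.
Lemma shift_add0r x : shift_add x shift_zero = x.
Proof. apply shift_ext; simpl; intros; rewrite !madd0r; reflexivity. Qed.

Definition shift_monoid : Monoid :=
  {| car := (B -> A) * B; madd := shift_add; mzero := shift_zero;
     maddA := shift_addA; madd0l := shift_add0l; madd0r := shift_add0r |}.

Definition shift_proj : Hom shift_monoid B :=
  {| hfun := fun x : shift_monoid => snd x;
     hom_add := fun _ _ => eq_refl; hom_zero := eq_refl |}.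

Definition shift_sec_fun (b : B) : shift_monoid := (fun _ => mzero, b).

Lemma shift_sec_add b b' :
  shift_sec_fun (madd b b') = madd (shift_sec_fun b) (shift_sec_fun b').
Proof. apply shift_ext; simpl; intros; rewrite ?madd0l; reflexivity. Qed.

Definition shift_sec : Hom B shift_monoid :=
  {| hfun := shift_sec_fun; hom_add := shift_sec_add; hom_zero := eq_refl |}.

Definition shift_point : Point B :=
  {| ptA := shift_monoid; ptf := shift_proj; pts := shift_sec; pt_sec := fun _ => eq_refl |}.

Lemma shift_decomp (x : shift_monoid) :
  x = madd ((fst x, mzero) : shift_monoid) (pts shift_point (snd x)).
Proof. apply shift_ext; simpl; intros; rewrite ?madd0l, ?madd0r; reflexivity. Qed.

Lemma shift_point_schreier : schreier shift_point.
Proof.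
  intros x; exists (fst x, mzero); split; [split; [reflexivity | apply shift_decomp]|].
  intros [p b] [Hb Hx]; simpl in Hb; subst b.
  apply shift_ext; [|reflexivity]; intros c.
  rewrite Hx at 1; simpl; apply madd0r.
Qed.

Lemma shift_sretr (x : shift_monoid) :
  sretr shift_point_schreier x = ((fst x, mzero) : shift_monoid).
Proof. apply sretr_unique with (snd x); [reflexivity | apply shift_decomp]. Qed.
End ShiftPoint.

Section PullbackSchreier.
Variables (E B : Monoid) (h : Hom E B) (P : Point B) (HP : schreier P).

Lemma pb_ker_ok a : h (fst (@mzero E, sretr HP a)) = ptf P (snd (@mzero E, sretr HP a)).
Proof. simpl; rewrite (hom_zero h), sretr_ker; reflexivity. Qed.

Definition pb_ker (a : ptA P) : ptA (pullback h P) :=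
  exist _ (mzero, sretr HP a) (pb_ker_ok a).

Lemma pb_schreier : schreier (pullback h P).
Proof.
  intros [[e a] Hea]; simpl in Hea; exists (pb_ker a); split.
  - split; [reflexivity|].
    apply sig_ext; simpl; rewrite madd0l, Hea, <- sretr_decomp; reflexivity.
  - intros [[e' k] Hk] [He' Hdec]; simpl in He', Hk; subst e'.
    apply (f_equal (@proj1_sig _ _)) in Hdec; simpl in Hdec; injection Hdec as _ Ha.
    apply sig_ext; simpl; f_equal; apply sretr_unique with (h e); [|exact Ha].
    rewrite <- Hk; apply hom_zero.
Qed.
End PullbackSchreier.

Section RightAdjoint.
Variables (E B : Monoid) (h : Hom E B) (Y : Point E) (HY : schreier Y).

Definition ker_act (e : E) (y : ptA Y) : ptA Y := sretr HY (madd (pts Y e) y).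

Definition equivariant (phi : B -> ptA Y) : Prop :=
  (forall c, ptf Y (phi c) = mzero) /\
  (forall e c, phi (madd (h e) c) = ker_act e (phi c)).

Definition ra_pred (x : shift_monoid (ptA Y) B) : Prop := equivariant (fst x).

Lemma ra_pred_add x y : ra_pred x -> ra_pred y -> ra_pred (madd x y).
Proof.
  destruct x as [p b], y as [q b']; intros [Hp0 Hp] [Hq0 Hq]; split; simpl.
  - intros c; rewrite (hom_add (ptf Y)), Hp0, Hq0, madd0l; reflexivity.
  - intros e c; unfold ker_act.
    rewrite Hp, <- maddA, Hq, sretr_sec_add_ker by apply Hp0; reflexivity.
Qed.

Lemma ra_pred_sec b : ra_pred (pts (shift_point (ptA Y) B) b).
Proof.
  split; simpl; [intros; apply hom_zero|].
  intros e c; unfold ker_act; rewrite madd0r, sretr_sec; reflexivity.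
Qed.

Lemma ra_pred_sretr x : ra_pred x -> ra_pred (sretr (@shift_point_schreier _ _) x).
Proof. rewrite shift_sretr; exact id. Qed.

Definition ra_point : Point B :=
  @sub_point B (shift_point (ptA Y) B) ra_pred ra_pred_add (ra_pred_sec mzero) ra_pred_sec.

Lemma ra_point_schreier : schreier ra_point.
Proof. exact (sub_point_schreier (@shift_point_schreier _ _) ra_pred_sretr). Qed.

Definition ra_fun (r : ptA ra_point) : B -> ptA Y := fst (proj1_sig r).

Definition counit_fun (x : ptA (pullback h ra_point)) : ptA Y :=
  madd (ra_fun (snd (proj1_sig x)) mzero) (pts Y (fst (proj1_sig x))).

Lemma counit_add x y : counit_fun (madd x y) = madd (counit_fun x) (counit_fun y).
Proof.
  destruct x as [[e [[p b] [Hp0 Hp]]] Hx], y as [[e' [[q b'] [Hq0 Hq]]] Hy].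
  unfold counit_fun, ra_fun; simpl in *; subst b.
  rewrite madd0l, <- (madd0r _ (h e)), Hq, (hom_add (pts Y)); unfold ker_act.
  rewrite <- !maddA; f_equal; rewrite !maddA; f_equal.
  apply sretr_conj, Hq0.
Qed.

Lemma counit_zero : counit_fun mzero = mzero.
Proof. unfold counit_fun; simpl; rewrite (hom_zero (pts Y)); apply madd0l. Qed.

Definition counit_hom : Hom (ptA (pullback h ra_point)) (ptA Y) :=
  {| hfun := counit_fun; hom_add := counit_add; hom_zero := counit_zero |}.

Lemma counit_f x : ptf Y (counit_hom x) = ptf (pullback h ra_point) x.
Proof.
  destruct x as [[e [[p b] [Hp0 Hp]]] Hx]; unfold counit_hom, counit_fun, ra_fun; simpl.
  rewrite (hom_add (ptf Y)), Hp0, pt_sec; apply madd0l.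
Qed.

Lemma counit_s e : counit_hom (pts (pullback h ra_point) e) = pts Y e.
Proof. apply madd0l. Qed.

Definition counit : PtHom (pullback h ra_point) Y :=
  {| phom := counit_hom; ph_f := counit_f; ph_s := counit_s |}.

Lemma ra_ext (r r' : ptA ra_point) :
  (forall c, ra_fun r c = ra_fun r' c) -> ptf ra_point r = ptf ra_point r' -> r = r'.
Proof. intros Hfun Hf; apply proj1_sig_inj, shift_ext; assumption. Qed.

Section Transpose.
Variables (X : Point B) (HX : schreier X) (F : PtHom (pullback h X) Y).

Definition transpose_fun (x : ptA X) (c : B) : ptA Y := F (pb_ker h HX (madd (pts X c) x)).

Lemma F_pb_ker_ker a : ptf Y (F (pb_ker h HX a)) = mzero.
Proof. rewrite ph_f; reflexivity. Qed.

Lemma F_pb_ker_sec b : F (pb_ker h HX (pts X b)) = mzero.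
Proof.
  rewrite <- (hom_zero F); f_equal; apply sig_ext; simpl; rewrite sretr_sec; reflexivity.
Qed.

Lemma transpose_equivariant x : equivariant (transpose_fun x).
Proof.
  split; [intros c; apply F_pb_ker_ker|].
  intros e c; unfold transpose_fun, ker_act; symmetry.
  apply sretr_unique with e; [apply F_pb_ker_ker|].
  rewrite <- (ph_s F e), <- !(hom_add F); f_equal.
  apply sig_ext; simpl; rewrite madd0l, madd0r; f_equal.
  rewrite (hom_add (pts X)), <- maddA, <- (sretr_sec_sretr HX (h e)).
  symmetry; apply sretr_conj, sretr_ker.
Qed.

Definition transpose_val (x : ptA X) : ptA ra_point :=
  exist ra_pred (transpose_fun x, ptf X x) (transpose_equivariant x).

Lemma transpose_add x y :
  transpose_val (madd x y) = madd (transpose_val x) (transpose_val y).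
Proof.
  apply ra_ext; [|apply hom_add]; intros c.
  unfold ra_fun; simpl; unfold transpose_fun; rewrite <- (hom_add F); f_equal.
  apply sig_ext; simpl; rewrite madd0l; f_equal.
  rewrite maddA, sretr_add, (hom_add (ptf X)), pt_sec, (hom_add (pts X)); reflexivity.
Qed.

Lemma transpose_zero : transpose_val mzero = mzero.
Proof.
  apply ra_ext; [|apply hom_zero]; intros c.
  unfold ra_fun; simpl; unfold transpose_fun; rewrite madd0r; apply F_pb_ker_sec.
Qed.

Definition transpose_hom : Hom (ptA X) (ptA ra_point) :=
  {| hfun := transpose_val; hom_add := transpose_add; hom_zero := transpose_zero |}.

Lemma transpose_s b : transpose_hom (pts X b) = pts ra_point b.
Proof.
  apply ra_ext; [|apply pt_sec]; intros c.
  unfold ra_fun; simpl; unfold transpose_fun.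
  rewrite <- (hom_add (pts X)); apply F_pb_ker_sec.
Qed.

Definition transpose : PtHom X ra_point :=
  {| phom := transpose_hom; ph_f := fun _ => eq_refl; ph_s := transpose_s |}.

Lemma transpose_factor : pt_eq (pt_comp counit (pullback_hom h transpose)) F.
Proof.
  intros [[e x] Hex]; simpl; unfold counit_fun, ra_fun; simpl; unfold transpose_fun.
  rewrite <- (ph_s F e), <- (hom_add F); f_equal.
  apply sig_ext; simpl in *; rewrite madd0l; f_equal.
  rewrite (hom_zero (pts X)), madd0l, Hex; symmetry; apply sretr_decomp.
Qed.

Variables (t : Hom B E) (Ht : forall b, h (t b) = b).

Lemma pb_lift_ok (x : ptA X) c :
  h (fst (t (madd c (ptf X x)), madd (pts X c) x))
  = ptf X (snd (t (madd c (ptf X x)), madd (pts X c) x)).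
Proof. simpl; rewrite Ht, (hom_add (ptf X)), pt_sec; reflexivity. Qed.

Definition pb_lift (x : ptA X) (c : B) : ptA (pullback h X) := exist _ _ (pb_lift_ok x c).

Lemma ra_fun_factor (G : PtHom X ra_point) :
  pt_eq (pt_comp counit (pullback_hom h G)) F ->
  forall x c, ra_fun (G x) c = sretr HY (F (pb_lift x c)).
Proof.
  intros HG x c; rewrite <- (HG (pb_lift x c)); simpl; unfold counit_fun; simpl.
  symmetry; apply sretr_unique with (t (madd c (ptf X x))).
  - apply (proj2_sig (G x)).
  - rewrite (hom_add G), (ph_s G); unfold ra_fun; simpl; rewrite !madd0l; reflexivity.
Qed.

Lemma transpose_unique (G : PtHom X ra_point) :
  pt_eq (pt_comp counit (pullback_hom h G)) F -> pt_eq G transpose.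
Proof.
  intros HG x; apply ra_ext.
  - intros c; rewrite (ra_fun_factor HG), (ra_fun_factor transpose_factor); reflexivity.
  - rewrite !ph_f; reflexivity.
Qed.
End Transpose.
End RightAdjoint.

Lemma pullback_has_right_adjoint (E B : Monoid) (h : Hom E B) :
  split_epi h -> has_right_adjoint_S h.
Proof.
  intros [t Ht] Y HY; exists (ra_point h HY), (counit h HY).
  split; [apply ra_point_schreier|].
  intros X HX F; exists (transpose HY HX F); split; [apply transpose_factor|].
  intros G HG; exact (transpose_unique HX t Ht HG).
Qed.

Section ProdMonoid.
Variables A C : Monoid.

Definition prod_add (x y : A * C) : A * C := (madd (fst x) (fst y), madd (snd x) (snd y)).

Lemma prod_addA x y z : prod_add x (prod_add y z) = prod_add (prod_add x y) z.
Proof. unfold prod_add; simpl; rewrite !maddA; reflexivity. Qed.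
Lemma prod_add0l x : prod_add (mzero, mzero) x = x.
Proof. destruct x; unfold prod_add; simpl; rewrite !madd0l; reflexivity. Qed.
Lemma prod_add0r x : prod_add x (mzero, mzero) = x.
Proof. destruct x; unfold prod_add; simpl; rewrite !madd0r; reflexivity. Qed.

Definition prod_monoid : Monoid :=
  {| car := A * C; madd := prod_add; mzero := (mzero, mzero);
     maddA := prod_addA; madd0l := prod_add0l; madd0r := prod_add0r |}.
End ProdMonoid.

Section KernelPair.
Variables (B : Monoid) (M N : Point B) (m : PtHom M N).

Definition kp_pred (p : prod_monoid (ptA M) (ptA M)) : Prop := m (fst p) = m (snd p).

Lemma kp_pred_add p q : kp_pred p -> kp_pred q -> kp_pred (madd p q).
Proof. unfold kp_pred; simpl; intros Hp Hq; rewrite !(hom_add m), Hp, Hq; reflexivity. Qed.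

Lemma kp_pred_zero : kp_pred mzero.
Proof. reflexivity. Qed.

Definition kp_monoid : Monoid := sub_monoid kp_pred_add kp_pred_zero.

Lemma kp_f_add (x y : kp_monoid) :
  ptf M (fst (proj1_sig (madd x y)))
  = madd (ptf M (fst (proj1_sig x))) (ptf M (fst (proj1_sig y))).
Proof. apply hom_add. Qed.

Definition kp_f : Hom kp_monoid B :=
  {| hfun := fun x : kp_monoid => ptf M (fst (proj1_sig x));
     hom_add := kp_f_add; hom_zero := hom_zero (ptf M) |}.

Definition kp_s_fun (b : B) : kp_monoid := exist kp_pred (pts M b, pts M b) eq_refl.

Lemma kp_s_add b b' : kp_s_fun (madd b b') = madd (kp_s_fun b) (kp_s_fun b').
Proof. apply proj1_sig_inj; simpl; rewrite (hom_add (pts M)); reflexivity. Qed.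
Lemma kp_s_zero : kp_s_fun mzero = mzero.
Proof. apply proj1_sig_inj; simpl; rewrite (hom_zero (pts M)); reflexivity. Qed.

Definition kp_s : Hom B kp_monoid :=
  {| hfun := kp_s_fun; hom_add := kp_s_add; hom_zero := kp_s_zero |}.

Definition kernel_pair : Point B :=
  {| ptA := kp_monoid; ptf := kp_f; pts := kp_s; pt_sec := pt_sec M |}.

Lemma kp_f_snd (x : kp_monoid) : ptf M (snd (proj1_sig x)) = ptf M (fst (proj1_sig x)).
Proof.
  destruct x as [[a a'] H]; unfold kp_pred in H; simpl in *.
  rewrite <- (ph_f m a), <- (ph_f m a'), H; reflexivity.
Qed.

Definition kp_fst : PtHom kernel_pair M :=
  @Build_PtHom B kernel_pair M
    {| hfun := fun x : kp_monoid => fst (proj1_sig x);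
       hom_add := fun _ _ => eq_refl; hom_zero := eq_refl |}
    (fun _ => eq_refl) (fun _ => eq_refl).

Definition kp_snd : PtHom kernel_pair M :=
  @Build_PtHom B kernel_pair M
    {| hfun := fun x : kp_monoid => snd (proj1_sig x);
       hom_add := fun _ _ => eq_refl; hom_zero := eq_refl |}
    kp_f_snd (fun _ => eq_refl).

Variables (HM : schreier M) (HN : schreier N).

Lemma kp_pred_sretr p : kp_pred p -> kp_pred (sretr HM (fst p), sretr HM (snd p)).
Proof. unfold kp_pred; simpl; intros H; rewrite !(sretr_natural HM HN), H; reflexivity. Qed.

Lemma kernel_pair_schreier : schreier kernel_pair.
Proof.
  intros [[a a'] Ha].
  assert (Hf : ptf M a' = ptf M a) by exact (kp_f_snd (exist _ _ Ha)).
  exists (exist kp_pred _ (kp_pred_sretr Ha)); split.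
  - split; [apply sretr_ker|]; apply proj1_sig_inj; simpl; unfold prod_add; simpl.
    rewrite <- (sretr_decomp HM a), <- Hf, <- (sretr_decomp HM a'); reflexivity.
  - intros [[k k'] Hk] [Hk0 Hdec]; apply (f_equal (@proj1_sig _ _)) in Hdec.
    simpl in Hk0, Hdec; injection Hdec as Ha1 Ha2.
    assert (Hk0' : ptf M k' = mzero)
      by (rewrite (kp_f_snd (exist _ _ Hk) : ptf M k' = ptf M k); exact Hk0).
    rewrite <- Hf in Ha2.
    apply proj1_sig_inj; simpl; f_equal; eapply sretr_unique; eassumption.
Qed.

Lemma mono_injective : is_mono_S m -> forall a a', m a = m a' -> a = a'.
Proof.
  intros Hm a a' Haa'.
  apply (Hm kernel_pair kernel_pair_schreier kp_fst kp_snd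
           (fun x => proj2_sig x) (exist kp_pred (a, a') Haa')).
Qed.
End KernelPair.

Section BijectiveIso.
Variables (B : Monoid) (M N : Point B) (m : PtHom M N).
Hypotheses (m_inj : forall a a', m a = m a' -> a = a')
  (m_surj : forall y, exists x, m x = y).

Definition inv_fun (y : ptA N) : ptA M :=
  proj1_sig (constructive_indefinite_description _ (m_surj y)).

Lemma inv_funK y : m (inv_fun y) = y.
Proof. exact (proj2_sig (constructive_indefinite_description _ (m_surj y))). Qed.

Lemma inv_add y y' : inv_fun (madd y y') = madd (inv_fun y) (inv_fun y').
Proof. apply m_inj; rewrite (hom_add m), !inv_funK; reflexivity. Qed.
Lemma inv_zero : inv_fun mzero = mzero.
Proof. apply m_inj; rewrite (hom_zero m), inv_funK; reflexivity. Qed.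

Definition inv_hom : Hom (ptA N) (ptA M) :=
  {| hfun := inv_fun; hom_add := inv_add; hom_zero := inv_zero |}.

Lemma inv_f y : ptf M (inv_hom y) = ptf N y.
Proof. simpl; rewrite <- (ph_f m), inv_funK; reflexivity. Qed.
Lemma inv_s b : inv_hom (pts N b) = pts M b.
Proof. apply m_inj; simpl; rewrite inv_funK, (ph_s m); reflexivity. Qed.

Definition inv_pt : PtHom N M := {| phom := inv_hom; ph_f := inv_f; ph_s := inv_s |}.

Lemma bijective_iso : is_iso m.
Proof. exists inv_pt; split; intros a; simpl; [apply m_inj|]; apply inv_funK. Qed.
End BijectiveIso.

Section JointlyStrongEpi.
Variables (E B : Monoid) (h : Hom E B) (Z : Point B) (HZ : schreier Z)
  (M : Point E) (m : PtHom M (pullback h Z)).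

Definition in_ker_image (k : ptA Z) : Prop :=
  exists mu, proj1_sig (m mu) = (mzero, k).

Lemma in_ker_image_add k k' : in_ker_image k -> in_ker_image k' -> in_ker_image (madd k k').
Proof.
  intros [mu Hmu] [mu' Hmu']; exists (madd mu mu'); rewrite (hom_add m).
  destruct (m mu) as [[e a] Ha], (m mu') as [[e' a'] Ha']; simpl in *.
  injection Hmu as -> ->; injection Hmu' as -> ->; rewrite madd0l; reflexivity.
Qed.

Lemma in_ker_image_zero : in_ker_image mzero.
Proof. exists mzero; rewrite (hom_zero m); reflexivity. Qed.

Definition reachable (z : ptA Z) : Prop :=
  forall b, in_ker_image (sretr HZ (madd (pts Z b) z)).

Lemma reachable_add z z' : reachable z -> reachable z' -> reachable (madd z z').
Proof. intros Hz Hz' b; rewrite maddA, sretr_add; apply in_ker_image_add; auto. Qed.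

Lemma reachable_zero : reachable mzero.
Proof. intros b; rewrite madd0r, sretr_sec; apply in_ker_image_zero. Qed.

Lemma reachable_sec b' : reachable (pts Z b').
Proof. intros b; rewrite <- (hom_add (pts Z)), sretr_sec; apply in_ker_image_zero. Qed.

Lemma reachable_sretr z : reachable z -> reachable (sretr HZ z).
Proof. intros Hz b; rewrite sretr_sec_sretr; apply Hz. Qed.

Definition reachable_point : Point B :=
  sub_point reachable_add reachable_zero reachable_sec.

Lemma reachable_point_schreier : schreier reachable_point.
Proof.
  exact (sub_point_schreier (S_add := reachable_add) (S_zero := reachable_zero)
           (S_sec := reachable_sec) HZ reachable_sretr).
Qed.

Lemma reachable_factor (X : Point B) (HX : schreier X) (f : PtHom X Z)
  (g : PtHom (pullback h X) M) :
  pt_eq (pt_comp m g) (pullback_hom h f) -> forall x, reachable (f x).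
Proof.
  intros Hg x b; rewrite <- (ph_s f), <- (hom_add f), <- (sretr_natural HX HZ).
  exists (g (pb_ker h HX (madd (pts X b) x))).
  exact (f_equal (@proj1_sig _ _) (Hg (pb_ker h HX (madd (pts X b) x)))).
Qed.

Lemma reachable_of_jse (X1 X2 : Point B) (HX1 : schreier X1) (HX2 : schreier X2)
  (f1 : PtHom X1 Z) (f2 : PtHom X2 Z) (Hj : jointly_strong_epi_S f1 f2)
  (g1 : PtHom (pullback h X1) M) (g2 : PtHom (pullback h X2) M) :
  pt_eq (pt_comp m g1) (pullback_hom h f1) -> pt_eq (pt_comp m g2) (pullback_hom h f2) ->
  forall z, reachable z.
Proof.
  intros Hg1 Hg2.
  apply (sub_incl_iso_full (S_add := reachable_add) (S_zero := reachable_zero)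
           (S_sec := reachable_sec)).
  apply (Hj reachable_point reachable_point_schreier _
           (@sub_incl_mono _ _ _ reachable_add reachable_zero reachable_sec)
           (sub_pt_corestr _ _ _ f1 (reachable_factor HX1 Hg1))
           (sub_pt_corestr _ _ _ f2 (reachable_factor HX2 Hg2)));
    intros x; reflexivity.
Qed.

Lemma surjective_of_reachable : (forall z, reachable z) -> forall y, exists x, m x = y.
Proof.
  intros Hall [[e z] Hez]; simpl in Hez.
  destruct (Hall z mzero) as [mu Hmu]; rewrite (hom_zero (pts Z)), madd0l in Hmu.
  exists (madd mu (pts M e)); rewrite (hom_add m), (ph_s m).
  destruct (m mu) as [[e' k] Hk]; simpl in Hmu; injection Hmu as -> ->.
  apply sig_ext; simpl; rewrite madd0l, Hez, <- sretr_decomp; reflexivity.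
Qed.
End JointlyStrongEpi.

Lemma pullback_preserves_jse (E B : Monoid) (h : Hom E B) : preserves_jse_S h.
Proof.
  intros X1 X2 Z HX1 HX2 HZ f1 f2 Hj M HM m Hm g1 g2 Hg1 Hg2.
  apply bijective_iso.
  - exact (mono_injective HM (pb_schreier HZ) Hm).
  - exact (surjective_of_reachable (reachable_of_jse HZ HX1 HX2 Hj Hg1 Hg2)).
Qed.

Theorem mainTheorem8 :
  (forall (E B : Monoid) (h : Hom E B), pullback_preserves_schreier h) /\
  (forall (E B : Monoid) (h : Hom E B), split_epi h -> has_right_adjoint_S h) /\
  (forall (E B : Monoid) (h : Hom E B), preserves_jse_S h).
Proof.
  split; [|split].
  - intros E B h P HP; exact (pb_schreier (h := h) HP).
  - exact pullback_has_right_adjoint.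
  - exact pullback_preserves_jse.
Qed.
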